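(* Let $f:\mathbb{R}^d\to\mathbb{R}$ be twice differentiable with $L$-Lipschitz Hessian. Let $x,g\in\mathbb{R}^d$, $H\in\mathbb{R}^{d\times d}$ symmetric, $M\ge L$, let $x^+$ be a global minimizer of $y\mapsto\Omega_{M,g,H}(y,x)$ and $r:=\|x^+-x\|$. Then $$ \frac{1}{\sqrt{M}}\|\nabla f(x^+)\|^{3/2}\;\le\;3Mr^3+\frac{2}{\sqrt{M}}\|\nabla f(x)-g\|^{3/2}+\frac{1}{M^2}\|\nabla^2 f(x)-H\|^3 . $$
   Context: $\|\cdot\|$ is the Euclidean norm on vectors and the spectral norm on symmetric matrices. The Hessian of $f$ is $L$-Lipschitz means $\|\nabla^2 f(x)-\nabla^2 f(y)\|\le L\|x-y\|$ for all $x,y$. For $M>0$, $g\in\mathbb{R}^d$ and symmetric $H$, $\Omega_{M,g,H}(y,x):=\langle g,y-x\rangle+\frac12\langle H(y-x),y-x\rangle+\frac{M}{6}\|y-x\|^3$. *)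

From HB Require Import structures.
From mathcomp Require Import all_boot all_order all_algebra.
From mathcomp Require Import all_classical all_reals all_analysis.
Set Implicit Arguments. Unset Strict Implicit. Unset Printing Implicit Defensive.
Import Order.TTheory GRing.Theory Num.Theory.
Import numFieldNormedType.Exports.
Local Open Scope classical_set_scope.
Local Open Scope ring_scope.

Definition edot {R : realType} {d : nat} (u v : 'cV[R]_d) : R :=
  \sum_(i < d) u i 0 * v i 0.

Definition enorm {R : realType} {d : nat} (u : 'cV[R]_d) : R :=
  Num.sqrt (edot u u).

Definition spnorm {R : realType} {d : nat} (A : 'M[R]_d) : R :=
  sup [set enorm (A *m u) | u in [set u : 'cV[R]_d | enorm u <= 1]].

Definition Omega {R : realType} {d : nat} (M : R) (g : 'cV[R]_d) (H : 'M[R]_d)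
  (y x : 'cV[R]_d) : R :=
  edot g (y - x) + 2^-1 * edot (H *m (y - x)) (y - x)
  + M / 6 * enorm (y - x) ^+ 3.

Definition is_gradient {R : realType} {d : nat} (f : 'cV[R]_d -> R)
  (grad : 'cV[R]_d -> 'cV[R]_d) : Prop :=
  forall x, differentiable f x /\ ('d f x : 'cV[R]_d -> R) = (fun h => edot (grad x) h).

Definition is_hessian {R : realType} {d : nat} (grad : 'cV[R]_d -> 'cV[R]_d)
  (hess : 'cV[R]_d -> 'M[R]_d) : Prop :=
  forall x, differentiable grad x /\
            ('d grad x : 'cV[R]_d -> 'cV[R]_d) = (fun h => hess x *m h).

From HB Require Import structures.
From mathcomp Require Import all_boot all_order all_algebra.
From mathcomp Require Import all_classical all_reals all_analysis.
From mathcomp Require Import ring lra.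
Set Implicit Arguments. Unset Strict Implicit. Unset Printing Implicit Defensive.
Import Order.TTheory GRing.Theory Num.Theory.
Import numFieldNormedType.Exports.
Local Open Scope classical_set_scope.
Local Open Scope ring_scope.

(* Write s := x+ - x and r := |s|.  The argument has four ingredients:
   - first-order optimality of the global minimizer x+ of the model
     Omega_{M,g,H}(., x):  g + H s + (M/2) r s = 0  (cubic_model_stationary),
     proved by perturbing x+ along the candidate gradient and using a
     first-order expansion of |.|^3 (enorm_sub_cube);
   - the Taylor bound  |grad(x+s) - grad x - hess(x) s| <= (M/2) r^2  for an
     M-Lipschitz Hessian (gradient_taylor_bound), from the mean value theorem
     applied to t |-> <e, grad(x + t s)> (increment_le);
   - combining both, |grad x+| <= M r^2 + |grad x - g| + |hess x - H| r
     (gradient_at_model_minimizer_le);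
   - a purely scalar step turning this quadratic bound into the stated
     3/2-power estimate via Young's inequality (scaled_cube_bound). *)

Section RealInequalities.
Variable R : realFieldType.

Lemma le_of_sqr_le (x y : R) : 0 <= y -> x ^+ 2 <= y ^+ 2 -> x <= y.
Proof. by move=> y_ge0 sq_le; nra. Qed.

Lemma le0_of_small_bound (Q K : R) :
  (forall e, 0 < e -> e <= 1 -> Q <= e * K) -> Q <= 0.
Proof.
move=> small; rewrite leNgt; apply/negP => Q_gt0.
have den_gt0 : 0 < Q + `|K| by rewrite ltr_wpDr.
pose e := Q / (Q + `|K|).
have e_gt0 : 0 < e by rewrite divr_gt0.
have e_le1 : e <= 1 by rewrite ler_pdivrMr // mul1r lerDl.
have eK : e * (Q + `|K|) = Q by rewrite divfK // gt_eqF.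
have := small e e_gt0 e_le1; have := ler_norm K; nra.
Qed.

(* The cubic estimate behind the Taylor expansion of [t |-> t^3] for norms:
   if [b^2 = a^2 - 2P + N^2] and [|b - a| <= N], then
   [b^3 <= a^3 - 3aP + 3aN^2 + N^3]. *)
Lemma cube_expansion_le (a b P N : R) :
  0 <= a -> 0 <= b -> 0 <= N -> b <= a + N -> a <= b + N ->
  b ^+ 2 = a ^+ 2 - 2 * P + N ^+ 2 ->
  b ^+ 3 <= a ^+ 3 - 3 * a * P + 3 * a * N ^+ 2 + N ^+ 3.
Proof.
move=> a_ge0 b_ge0 N_ge0 ba_le ab_le b2.
have split3 : b ^+ 3 - a ^+ 3
    = 3 * a / 2 * (b ^+ 2 - a ^+ 2) + (b - a) ^+ 2 * (b + a / 2) by field.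
have gap : (b - a) ^+ 2 <= N ^+ 2 by nra.
have tail : (b - a) ^+ 2 * (b + a / 2) <= N ^+ 2 * (3 * a / 2 + N).
  apply: le_trans (ler_wpM2r _ gap) _; first lra.
  by apply: ler_wpM2l; [exact: sqr_ge0 | lra].
rewrite b2 in split3; lra.
Qed.

Lemma young_cube (X Y : R) : 0 <= X -> 0 <= Y ->
  27 * (X * Y ^+ 2) <= 4 * X ^+ 3 + 27 * Y ^+ 3.
Proof.
move=> X_ge0 Y_ge0.
have : 0 <= (3 * Y - 2 * X) ^+ 2 * (3 * Y + X) by apply: mulr_ge0; [exact: sqr_ge0 | lra].
have -> : (3 * Y - 2 * X) ^+ 2 * (3 * Y + X)
  = 4 * X ^+ 3 + 27 * Y ^+ 3 - 27 * (X * Y ^+ 2) by ring.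
lra.
Qed.

Lemma cube_of_square_bound (X Y Z b : R) :
  0 <= X -> 0 <= Y -> 0 <= Z -> 0 <= b ->
  X ^+ 2 <= Y ^+ 2 + Z ^+ 2 + b * Y -> X ^+ 3 <= 3 * Y ^+ 3 + 2 * Z ^+ 3 + b ^+ 3.
Proof.
move=> X_ge0 Y_ge0 Z_ge0 b_ge0 sq_le.
have bY_le : 2 * (b * Y) <= b ^+ 2 + Y ^+ 2 by have := sqr_ge0 (b - Y); nra.
have X3_le : 2 * X ^+ 3 <= 3 * (X * Y ^+ 2) + 2 * (X * Z ^+ 2) + X * b ^+ 2.
  have -> : 2 * X ^+ 3 = X * (2 * X ^+ 2) by ring.
  have -> : 3 * (X * Y ^+ 2) + 2 * (X * Z ^+ 2) + X * b ^+ 2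
    = X * (3 * Y ^+ 2 + 2 * Z ^+ 2 + b ^+ 2) by ring.
  by apply: ler_wpM2l => //; lra.
have := young_cube X_ge0 Y_ge0; have := young_cube X_ge0 Z_ge0.
have := young_cube X_ge0 b_ge0.
have := exprn_ge0 3 Y_ge0; have := exprn_ge0 3 Z_ge0; have := exprn_ge0 3 b_ge0.
lra.
Qed.

End RealInequalities.

Lemma powR32 (R : realType) (z : R) : 0 <= z -> z `^ (3 / 2) = Num.sqrt z ^+ 3.
Proof.
move=> z_ge0; have -> : (3 / 2 : R) = 1 + 2^-1 by field.
rewrite powRD; last by apply/implyP => /eqP; lra.
by rewrite powRr1 // powR12_sqrt // -{1}(sqr_sqrtr z_ge0) -exprSr.
Qed.

Lemma scaled_cube_bound (R : realType) (M G r al be : R) :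
  0 < M -> 0 <= G -> 0 <= r -> 0 <= al -> 0 <= be ->
  G <= M * r ^+ 2 + al + be * r ->
  (Num.sqrt M)^-1 * G `^ (3 / 2)
  <= 3 * M * r ^+ 3 + 2 / Num.sqrt M * al `^ (3 / 2) + (M ^+ 2)^-1 * be ^+ 3.
Proof.
move=> M_gt0 G_ge0 r_ge0 al_ge0 be_ge0 G_le.
rewrite !powR32 //.
set m := Num.sqrt M; set q := Num.sqrt G; set p := Num.sqrt al.
have m_gt0 : 0 < m by rewrite sqrtr_gt0.
have m_neq0 : m != 0 by rewrite gt_eqF.
have mM : m ^+ 2 = M by rewrite sqr_sqrtr // ltW.
have qG : q ^+ 2 = G by rewrite sqr_sqrtr.
have pal : p ^+ 2 = al by rewrite sqr_sqrtr.
have sq_le : (m * q) ^+ 2 <= (m ^+ 2 * r) ^+ 2 + (m * p) ^+ 2 + be * (m ^+ 2 * r).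
  by rewrite !exprMn qG pal mM; have := ler_wpM2l (ltW M_gt0) G_le; lra.
have := cube_of_square_bound (mulr_ge0 (ltW m_gt0) (sqrtr_ge0 G))
  (mulr_ge0 (exprn_ge0 2 (ltW m_gt0)) r_ge0) (mulr_ge0 (ltW m_gt0) (sqrtr_ge0 al)) be_ge0 sq_le.
have -> : m^-1 * q ^+ 3 = (m ^+ 4)^-1 * (m * q) ^+ 3 by field.
have -> : 3 * M * r ^+ 3 + 2 / m * p ^+ 3 + (M ^+ 2)^-1 * be ^+ 3
  = (m ^+ 4)^-1 * (3 * (m ^+ 2 * r) ^+ 3 + 2 * (m * p) ^+ 3 + be ^+ 3).
  by rewrite -mM; field.
by apply: ler_wpM2l; rewrite invr_ge0 exprn_ge0 // ltW.
Qed.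

Section EuclideanSpace.
Variables (R : realType) (d : nat).
Implicit Types (u v w : 'cV[R]_d) (A : 'M[R]_d).

Lemma edotC u v : edot u v = edot v u.
Proof. by apply: eq_bigr => i _; rewrite mulrC. Qed.

Lemma edotDl u v w : edot (u + v) w = edot u w + edot v w.
Proof. by rewrite /edot -big_split; apply: eq_bigr => i _; rewrite mxE mulrDl. Qed.

Lemma edotZl (a : R) u v : edot (a *: u) v = a * edot u v.
Proof. by rewrite /edot mulr_sumr; apply: eq_bigr => i _; rewrite mxE mulrA. Qed.

Lemma edotDr u v w : edot w (u + v) = edot w u + edot w v.
Proof. by rewrite !(edotC w) edotDl. Qed.

Lemma edotZr (a : R) u v : edot v (a *: u) = a * edot v u.
Proof. by rewrite !(edotC v) edotZl. Qed.

Lemma edotBl u v w : edot (u - v) w = edot u w - edot v w.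
Proof. by rewrite edotDl -scaleN1r edotZl mulN1r. Qed.

Lemma edotBr u v w : edot w (u - v) = edot w u - edot w v.
Proof. by rewrite !(edotC w) edotBl. Qed.

Lemma edot0l v : edot 0 v = 0.
Proof. by rewrite /edot big1 // => i _; rewrite mxE mul0r. Qed.

Lemma edot_ge0 u : 0 <= edot u u.
Proof. by apply: sumr_ge0 => i _; rewrite -expr2 sqr_ge0. Qed.

Lemma edot_eq0 u : edot u u = 0 -> u = 0.
Proof.
move=> /eqP; rewrite /edot psumr_eq0; last by move=> i _; rewrite -expr2 sqr_ge0.
move=> /allP coord0; apply/matrixP => i j; rewrite (ord1 j) mxE.
by have /(_ (mem_index_enum i)) := coord0 i; rewrite -expr2 sqrf_eq0 => /eqP.
Qed.

Lemma edot_mulmx A u v : edot (A *m u) v = edot u (A^T *m v).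
Proof.
rewrite /edot; under eq_bigr do rewrite mxE big_distrl.
rewrite exchange_big; apply: eq_bigr => j _; rewrite mxE big_distrr.
by apply: eq_bigr => i _ /=; rewrite !mxE mulrCA mulrA.
Qed.

Lemma enorm_ge0 u : 0 <= enorm u.
Proof. exact: sqrtr_ge0. Qed.

Lemma enorm_sq u : enorm u ^+ 2 = edot u u.
Proof. by rewrite sqr_sqrtr // edot_ge0. Qed.

Lemma enorm0 : enorm (0 : 'cV[R]_d) = 0.
Proof. by rewrite /enorm edot0l sqrtr0. Qed.

Lemma enormZ (a : R) u : enorm (a *: u) = `|a| * enorm u.
Proof. by rewrite /enorm edotZl edotZr mulrA -expr2 sqrtrM ?sqr_ge0 // sqrtr_sqr. Qed.

Lemma enormN u : enorm (- u) = enorm u.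
Proof. by rewrite -scaleN1r enormZ normrN normr1 mul1r. Qed.

(* Cauchy-Schwarz, squared form: expand [0 <= |b u - p v|^2] with
   [p = <u,v>] and [b = |v|^2]. *)
Lemma edot_CS u v : edot u v ^+ 2 <= edot u u * edot v v.
Proof.
set p := edot u v; set a := edot u u; set b := edot v v.
have [b_lt0|b_gt0|b0] := ltrgtP b 0.
- by move: (edot_ge0 v); rewrite -/b leNgt b_lt0.
- have := edot_ge0 (b *: u - p *: v).
  rewrite !edotBl !edotBr !edotZl !edotZr -/a -/b -/p (edotC v u) -/p.
  have -> : b * (b * a) - b * (p * p) - (p * (b * p) - p * (p * b))
    = b * (a * b - p ^+ 2) by ring.
  by rewrite pmulr_rge0 // subr_ge0.
- have v0 : v = 0 by apply: edot_eq0.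
  by rewrite /p v0 edotC edot0l b0 expr0n mulr0.
Qed.

Lemma edot_le u v : edot u v <= enorm u * enorm v.
Proof.
apply: le_of_sqr_le; first by rewrite mulr_ge0 ?enorm_ge0.
by rewrite exprMn !enorm_sq edot_CS.
Qed.

Lemma enormD u v : enorm (u + v) <= enorm u + enorm v.
Proof.
apply: le_of_sqr_le; first by rewrite addr_ge0 ?enorm_ge0.
have := edot_le u v.
by rewrite !enorm_sq edotDl !edotDr (edotC v u) -!enorm_sq; nra.
Qed.

Lemma enorm_sub_sq u w :
  enorm (u - w) ^+ 2 = enorm u ^+ 2 - 2 * edot u w + enorm w ^+ 2.
Proof. by rewrite !enorm_sq !edotBl !edotBr (edotC w u); ring. Qed.

Lemma enorm_sub_cube s w :
  enorm (s - w) ^+ 3 <= enorm s ^+ 3 - 3 * enorm s * edot s w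
                        + 3 * enorm s * enorm w ^+ 2 + enorm w ^+ 3.
Proof.
apply: cube_expansion_le; rewrite ?enorm_ge0 ?enorm_sub_sq //.
- by rewrite -(enormN w) enormD.
- by have := enormD (s - w) w; rewrite subrK.
Qed.

(* The set whose supremum defines the spectral norm is nonempty and bounded:
   [|A u|^2 <= (sum of the squared row norms of A) |u|^2]. *)
Lemma spnorm_hassup A :
  has_sup [set enorm (A *m u) | u in [set u : 'cV[R]_d | enorm u <= 1]].
Proof.
split; first by exists (enorm (A *m 0)), 0; rewrite //= enorm0 ler01.
pose F := \sum_(i < d) edot (row i A)^T (row i A)^T.
have F_ge0 : 0 <= F by apply: sumr_ge0 => i _; exact: edot_ge0.
have row_bound u : edot (A *m u) (A *m u) <= F * edot u u.
  rewrite [X in X <= _]/edot big_distrl; apply: ler_sum => i _.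
  have -> : (A *m u) i 0 = edot (row i A)^T u.
    by rewrite mxE; apply: eq_bigr => j _; rewrite !mxE.
  by rewrite -expr2 edot_CS.
exists (Num.sqrt F) => _ [u /= u_le1 <-]; apply: ler_wsqrtr.
have uu_le1 : edot u u <= 1 by rewrite -enorm_sq; have := enorm_ge0 u; nra.
have := edot_ge0 u; have := row_bound u; nra.
Qed.

Lemma spnorm_ge0 A : 0 <= spnorm A.
Proof.
apply: le_trans (sup_upper_bound (spnorm_hassup A) _); first exact: (enorm_ge0 (A *m 0)).
by exists 0; rewrite /= ?enorm0 ?ler01.
Qed.

Lemma spnorm_le A u : enorm (A *m u) <= spnorm A * enorm u.
Proof.
have [uu0|uu_neq0] := eqVneq (edot u u) 0.
  by rewrite (edot_eq0 uu0) mulmx0 enorm0 mulr0.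
have u_gt0 : 0 < enorm u by rewrite sqrtr_gt0 lt_def uu_neq0 edot_ge0.
have unit_le : enorm (A *m ((enorm u)^-1 *: u)) <= spnorm A.
  apply: sup_upper_bound; first exact: spnorm_hassup.
  exists ((enorm u)^-1 *: u) => //=.
  by rewrite enormZ ger0_norm ?invr_ge0 ?enorm_ge0 // mulVf // gt_eqF.
rewrite -scalemxAr enormZ ger0_norm ?invr_ge0 ?enorm_ge0 // in unit_le.
by rewrite -ler_pdivrMr // mulrC.
Qed.

End EuclideanSpace.

(* An increment bound from a linear bound on the derivative (by the mean value
   theorem applied to [phi t - a t - A t^2 / 2]). *)
Lemma increment_le (R : realType) (phi dphi : R -> R) (a A : R) :
  (forall t : R, is_derive t 1 phi (dphi t)) ->
  (forall t : R, 0 <= t <= 1 -> dphi t <= a + A * t) ->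
  phi 1 - phi 0 <= a + A / 2.
Proof.
move=> dphiP dphi_le.
pose psi := phi - a \*: (id : R -> R) - (A / 2) \*: ((id : R -> R) * (id : R -> R)).
pose dpsi (t : R) := dphi t - a *: 1 - (A / 2) *: (t *: 1 + t *: 1).
have dpsiP (t : R) : is_derive t (1 : R) psi (dpsi t).
  exact: is_deriveB (is_deriveB (dphiP t) (is_deriveZ a (is_derive_id t 1)))
                    (is_deriveZ (A / 2) (is_deriveM (is_derive_id t 1) (is_derive_id t 1))).
have psi_cont : {within `[0, 1], continuous psi}.
  by apply: derivable_within_continuous => t _; case: (dpsiP t).
have [c c01 mvt] := MVT_segment ler01 (fun t _ => dpsiP t) psi_cont.
move: mvt (dphi_le c c01).
rewrite /psi /dpsi !fctE /= /GRing.scale /=; lra.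
Qed.

Section TaylorBound.
Variables (R : realType) (d : nat).
Implicit Types (w x s : 'cV[R]_d).

Lemma edot_differentiable w x : differentiable (edot w) x.
Proof.
have -> : edot w = \sum_(i < d) (fun u : 'cV[R]_d => w i 0 *: (u i 0 : R)).
  by rewrite fct_sumE; apply/funext.
by apply: differentiable_sum => i; apply: differentiableZ; exact: differentiable_coord.
Qed.

Lemma diff_edot w x : 'd (edot w) x = edot w :> ('cV[R]_d -> R).
Proof.
have edot_linear : linear (edot w : 'cV[R]_d -> R^o).
  by move=> a u v; rewrite edotDr edotZr.
pose ew : {linear 'cV[R]_d -> R^o} :=
  HB.pack (edot w : 'cV[R]_d -> R^o) (GRing.isLinear.Build _ _ _ _ _ edot_linear).
have -> : edot w = ew by [].
apply: diff_lin => y; apply: differentiable_continuous; exact: edot_differentiable.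
Qed.

Variables (grad : 'cV[R]_d -> 'cV[R]_d) (hess : 'cV[R]_d -> 'M[R]_d).
Hypothesis hessP : is_hessian grad hess.

Lemma derive_along_segment w x s (t : R) :
  is_derive t 1 (fun t : R => edot w (grad (x + t *: s))) (edot w (hess (x + t *: s) *m s)).
Proof.
pose p (t : R) := x + t *: s.
have p_diff : is_diff t p ( *:%R^~ s).
  have -> : p = cst x + ( *:%R^~ s) by apply/funext.
  apply: is_diff_eq (is_diffD (is_diff_cst x t) (is_diff_scalel t s)) _.
  by apply/funext => h /=; rewrite add0r.
have [p_diff' p_d] := p_diff.
have [grad_diff grad_d] := hessP (p t).
have gp_diff : differentiable (grad \o p) t := differentiable_comp p_diff' grad_diff.
have e_diff : differentiable (edot w) ((grad \o p) t) := edot_differentiable _ _.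
have -> : (fun t : R => edot w (grad (x + t *: s))) = edot w \o (grad \o p) by [].
apply: DeriveDef; first by apply: diff_derivable; exact: differentiable_comp.
rewrite deriveE; last exact: differentiable_comp.
rewrite diff_comp // diff_comp //.
by rewrite p_d grad_d /= diff_edot scale1r.
Qed.


(* Second-order Taylor bound for the gradient under a [K]-Lipschitz Hessian:
   test the increment of the gradient against the remainder [e] itself. *)
Lemma gradient_taylor_bound (K : R) x s :
  0 <= K -> (forall u v, spnorm (hess u - hess v) <= K * enorm (u - v)) ->
  enorm (grad (x + s) - grad x - hess x *m s) <= K / 2 * enorm s ^+ 2.
Proof.
move=> K_ge0 hess_lip.
set e := grad (x + s) - grad x - hess x *m s.
have dphi_le (t : R) : 0 <= t <= 1 ->
    edot e (hess (x + t *: s) *m s) <= edot e (hess x *m s) + K * enorm e * enorm s ^+ 2 * t.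
  case/andP=> t_ge0 _; set D := hess (x + t *: s) - hess x.
  have D_le : spnorm D <= K * (t * enorm s).
    by have := hess_lip (x + t *: s) x; rewrite addrAC subrr add0r enormZ ger0_norm.
  have Ds_le : enorm (D *m s) <= K * t * enorm s ^+ 2.
    apply: le_trans (spnorm_le D s) _.
    by have := ler_wpM2r (enorm_ge0 s) D_le; rewrite expr2; lra.
  have := ler_wpM2l (enorm_ge0 e) Ds_le.
  have := edot_le e (D *m s); rewrite mulmxBl edotBr; lra.
have := increment_le (derive_along_segment e x s) dphi_le.
rewrite scale1r scale0r addr0.
have -> : edot e (grad (x + s)) - edot e (grad x) = edot e e + edot e (hess x *m s).
  by rewrite {3}/e !edotBr; ring.
rewrite -enorm_sq => e_sq_le.
have c_ge0 : 0 <= K / 2 * enorm s ^+ 2 by rewrite mulr_ge0 ?divr_ge0 ?sqr_ge0.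
have := enorm_ge0 e; nra.
Qed.

End TaylorBound.

Section CubicModel.
Variables (R : realType) (d : nat).
Variables (M : R) (g : 'cV[R]_d) (H : 'M[R]_d).
Hypothesis H_sym : H^T = H.

Lemma Omega_sub x xp w :
  Omega M g H (xp - w) x = Omega M g H xp x - edot (g + H *m (xp - x)) w
    + 2^-1 * edot (H *m w) w + M / 6 * (enorm (xp - x - w) ^+ 3 - enorm (xp - x) ^+ 3).
Proof.
rewrite /Omega [xp - w - x]addrAC; move: (xp - x) => s.
have H_adj : edot (H *m w) s = edot (H *m s) w by rewrite edot_mulmx H_sym edotC.
by rewrite mulmxBr !edotBl !edotBr edotDl H_adj; field.
Qed.

Hypothesis M_gt0 : 0 < M.

(* Moving from [xp] by
   [- e c] along the candidate gradient [c] lowers the model by [e |c|^2]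
   up to [O(e^2)], so [|c|^2 <= e K] for all small [e > 0]. *)
Lemma cubic_model_stationary x xp :
  (forall y, Omega M g H xp x <= Omega M g H y x) ->
  g + H *m (xp - x) + (M / 2 * enorm (xp - x)) *: (xp - x) = 0.
Proof.
move=> xp_min; set s := xp - x; set a := enorm s.
set c := g + H *m s + (M / 2 * a) *: s.
have cc : edot c c = edot (g + H *m s) c + M / 2 * a * edot s c.
  by rewrite {1}/c edotDl edotZl.
apply: edot_eq0; apply/eqP; rewrite eq_le edot_ge0 andbT.
apply: (@le0_of_small_bound _ _
  (`|edot (H *m c) c| / 2 + M / 2 * a * enorm c ^+ 2 + M / 6 * enorm c ^+ 3)).
move=> e e_gt0 e_le1.
have model_le := xp_min (xp - e *: c).
rewrite Omega_sub -/s -/a -scalemxAr !edotZl !edotZr in model_le.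
have cube := enorm_sub_cube s (e *: c).
rewrite edotZr enormZ (ger0_norm (ltW e_gt0)) -/a !exprMn in cube.
have M6_ge0 : 0 <= M / 6 by rewrite divr_ge0 // ltW.
have M6_cube := ler_wpM2l M6_ge0 cube.
have h_le := ler_wpM2l (sqr_ge0 e) (ler_norm (edot (H *m c) c)).
have e3_le : M / 6 * (e ^+ 3 * enorm c ^+ 3) <= M / 6 * (e ^+ 2 * enorm c ^+ 3).
  apply: ler_wpM2l => //; apply: ler_wpM2r; first exact: exprn_ge0 (enorm_ge0 c).
  by rewrite exprS ger_pMl ?exprn_gt0.
rewrite -(ler_pM2l e_gt0) cc.
lra.


Qed.

End CubicModel.

Lemma gradient_at_model_minimizer_le (R : realType) (d : nat)
    (gx gxs g : 'cV[R]_d) (Hx H : 'M[R]_d) (s : 'cV[R]_d) (M : R) :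
  0 <= M -> g + H *m s + (M / 2 * enorm s) *: s = 0 ->
  enorm (gxs - gx - Hx *m s) <= M / 2 * enorm s ^+ 2 ->
  enorm gxs <= M * enorm s ^+ 2 + enorm (gx - g) + spnorm (Hx - H) * enorm s.
Proof.
move=> M_ge0 stationary taylor; set k := M / 2 * enorm s.
have -> : gxs = (gxs - gx - Hx *m s) + (gx - g) + (Hx *m s - H *m s) - k *: s
                + (g + H *m s + k *: s).
  move: (Hx *m s) (H *m s) (k *: s) => Hxs Hs ks.
  by apply/matrixP => i j; rewrite !mxE; ring.
rewrite stationary addr0 -mulmxBl.
have ks : enorm (- (k *: s)) = M / 2 * enorm s ^+ 2.
  by rewrite enormN enormZ ger0_norm ?mulr_ge0 ?divr_ge0 ?enorm_ge0 // expr2 mulrA.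
have := enormD (gxs - gx - Hx *m s + (gx - g) + (Hx - H) *m s) (- (k *: s)).
have := enormD (gxs - gx - Hx *m s + (gx - g)) ((Hx - H) *m s).
have := enormD (gxs - gx - Hx *m s) (gx - g).
have := spnorm_le (Hx - H) s.
rewrite ks; lra.
Qed.

Theorem mainTheorem2 (R : realType) (d : nat) (f : 'cV[R]_d -> R)
  (grad : 'cV[R]_d -> 'cV[R]_d) (hess : 'cV[R]_d -> 'M[R]_d) (L M : R)
  (x g xplus : 'cV[R]_d) (H : 'M[R]_d) :
  is_gradient f grad ->
  is_hessian grad hess ->
  (forall u v, spnorm (hess u - hess v) <= L * enorm (u - v)) ->
  H^T = H ->
  0 < M -> L <= M ->
  (forall y, Omega M g H xplus x <= Omega M g H y x) ->
  let r := enorm (xplus - x) in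
  (Num.sqrt M)^-1 * enorm (grad xplus) `^ (3 / 2)
  <= 3 * M * r ^+ 3 + 2 / Num.sqrt M * enorm (grad x - g) `^ (3 / 2)
     + (M ^+ 2)^-1 * spnorm (hess x - H) ^+ 3.
Proof.
move=> _ hessP hess_lip H_sym M_gt0 L_le_M xplus_min /=.
have hess_lipM u v : spnorm (hess u - hess v) <= M * enorm (u - v).
  by apply: le_trans (hess_lip u v) _; apply: ler_wpM2r; rewrite ?enorm_ge0.
have taylor := gradient_taylor_bound hessP x (xplus - x) (ltW M_gt0) hess_lipM.
rewrite [x + _]addrC subrK in taylor.
have stationary := cubic_model_stationary H_sym M_gt0 xplus_min.
apply: scaled_cube_bound; rewrite ?enorm_ge0 ?spnorm_ge0 //.
exact: gradient_at_model_minimizer_le (ltW M_gt0) stationary taylor.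
Qed.
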